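(* Let $C=\begin{pmatrix}0&1\\-1&0\end{pmatrix}$, $D=\begin{pmatrix}0&1\\-1&1\end{pmatrix}$ and $\Gamma_3=\langle C,D\rangle\subset\mathrm{PSL}_2\mathbb{R}$ (the $(2,3,\infty)$-triangle group, i.e. the modular group, with $\Gamma_3\cong\langle C,D\mid C^2=D^3=1\rangle$). If $X,Y\in\Gamma_3$ satisfy $\Gamma_3=\langle X,Y\rangle$ and $\mathrm{tr}\,X=\mathrm{tr}\,Y$, then $X$ and $Y$ are parabolic.
   Context: Traces are of lifts to $\mathrm{SL}_2\mathbb{R}$; ''$\mathrm{tr}\,X=\mathrm{tr}\,Y$'' means the elements admit lifts of equal trace. Parabolic means non-identity with $\mathrm{tr}^2=4$. *)

(* Elements of PSL_2(R) lying in Gamma_3 are represented by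
   integer lifts in SL_2(Z) (every word in C, D is an integer matrix);
   equality in PSL_2 is equality up to sign. *)
From HB Require Import structures.
From mathcomp Require Import all_boot all_order all_algebra.
Set Implicit Arguments. Unset Strict Implicit. Unset Printing Implicit Defensive.
Import Order.TTheory GRing.Theory Num.Theory.
Local Open Scope ring_scope.

Definition mx2 (a b c d : int) : 'M[int]_2 :=
  \matrix_(i < 2, j < 2)
    if (i == 0 :> nat) then (if (j == 0 :> nat) then a else b)
    else (if (j == 0 :> nat) then c else d).

Definition matC : 'M[int]_2 := mx2 0 1 (-1) 0.
Definition matD : 'M[int]_2 := mx2 0 1 (-1) 1.

(* Matrices in SL_2 given by words in the elements of S and their inverses
   (for det-1 matrices the inverse is the adjugate). *)
Inductive sgen (S : seq 'M[int]_2) : 'M[int]_2 -> Prop :=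
  | sgen1 : sgen S 1%:M
  | sgenM : forall A M, A \in S -> sgen S M -> sgen S (A *m M)
  | sgenV : forall A M, A \in S -> sgen S M -> sgen S (\adj A *m M).

(* membership of the class of M in the subgroup of PSL_2 generated by the
   classes of the elements of S *)
Definition pgen (S : seq 'M[int]_2) (M : 'M[int]_2) : Prop :=
  sgen S M \/ sgen S (- M).

Definition Gamma3 (M : 'M[int]_2) : Prop := pgen [:: matC; matD] M.

(* traces of lifts agree: equal up to sign *)
Definition same_trace (X Y : 'M[int]_2) : Prop :=
  \tr X = \tr Y \/ \tr X = - \tr Y.

Definition parabolic (M : 'M[int]_2) : Prop :=
  M <> 1%:M /\ M <> - 1%:M /\ (\tr M) ^+ 2 = 4.

(* Write [A, B] = AB - BA for the ring commutator of 2x2 matrices.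
   1. If x, y generate the group, [A, B] is a left multiple N [x, y] for any
      words A, B in x, y and their inverses.  By induction on words: [-,-] is
      a derivation in each argument, the inverse adj A = tr(A) - A of a letter
      satisfies [adj A, B] = - [A, B], and [A, B] A = adj(A) [A, B] lets
      [x, y] move across any word from the right to the left.
   2. For the generators C, D of the modular group det [C, D] = -1, hence
      det [X, Y] = +-1 for any generating pair X, Y.
   3. The Fricke-type identity for determinant-one matrices
        det [X, Y] = 4 - tr X^2 - tr Y^2 - tr(XY)^2 + tr X tr Y tr(XY)
      with tr Y = +-tr X gives a Diophantine equation forcing tr X^2 = 4.
      Finally X, Y are not +-1, as scalar matrices commute with everything. *)

From HB Require Import structures.
From mathcomp Require Import all_boot all_order all_algebra.
From mathcomp Require Import ring zify.
Set Implicit Arguments. Unset Strict Implicit. Unset Printing Implicit Defensive.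
Import Order.TTheory GRing.Theory Num.Theory.
Local Open Scope ring_scope.

Section Commutator.
Variables (R : comNzRingType) (n : nat).
Implicit Types A B C : 'M[R]_n.

Definition comm A B := A *m B - B *m A.

Lemma commN A B : comm B A = - comm A B.
Proof. by rewrite /comm opprB. Qed.

Lemma comm_oppl A B : comm (- A) B = - comm A B.
Proof. by rewrite /comm mulNmx mulmxN opprB opprK addrC. Qed.

Lemma comm_oppr A B : comm A (- B) = - comm A B.
Proof. by rewrite commN comm_oppl commN opprK. Qed.

Lemma comm_scalar (a : R) B : comm a%:M B = 0.
Proof. by rewrite /comm scalar_mxC subrr. Qed.

Lemma comm_mulr A B C : comm A (B *m C) = comm A B *m C + B *m comm A C.
Proof. by rewrite /comm mulmxBl mulmxBr !mulmxA addrA subrK. Qed.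

Lemma comm_mull A B C : comm (A *m B) C = A *m comm B C + comm A C *m B.
Proof. by rewrite /comm mulmxBl mulmxBr !mulmxA addrA subrK. Qed.
End Commutator.

Lemma ord2P (i : 'I_2) : i = 0 \/ i = 1.
Proof. by case: i => [[|[|m]] Hi]; [left|right|by []]; apply: val_inj. Qed.

Lemma sum_ord2 (V : nmodType) (F : 'I_2 -> V) : \sum_(k < 2) F k = F 0 + F 1.
Proof. by rewrite big_ord_recl big_ord1; congr (F _ + F _); apply: val_inj. Qed.

Lemma matrix2P (T : Type) (A B : 'M[T]_2) :
  A 0 0 = B 0 0 -> A 0 1 = B 0 1 -> A 1 0 = B 1 0 -> A 1 1 = B 1 1 -> A = B.
Proof.
move=> e00 e01 e10 e11; apply/matrixP => i j.
by case: (ord2P i) => ->; case: (ord2P j) => ->.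
Qed.

Lemma mxtrace2 (R : pzSemiRingType) (A : 'M[R]_2) : \tr A = A 0 0 + A 1 1.
Proof. exact: sum_ord2. Qed.

Lemma det_mx2 (R : comNzRingType) (A : 'M[R]_2) :
  \det A = A 0 0 * A 1 1 - A 0 1 * A 1 0.
Proof.
have lift01 : lift (0 : 'I_2) (0 : 'I_1) = 1 by apply: val_inj.
have lift10 : lift (1 : 'I_2) (0 : 'I_1) = 0 by apply: val_inj.
rewrite (expand_det_row _ 0) sum_ord2 /cofactor !det_mx11 !mxE /= lift01 lift10.
by rewrite expr0 expr1 mul1r mulN1r mulrN.
Qed.

(* For 2x2 matrices the adjugate is tr(A) - A (Cayley-Hamilton). *)
Lemma adj_mx2 (R : comNzRingType) (A : 'M[R]_2) : \adj A = (\tr A)%:M - A.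
Proof.
have lift01 : lift (0 : 'I_2) (0 : 'I_1) = 1 by apply: val_inj.
have lift10 : lift (1 : 'I_2) (0 : 'I_1) = 0 by apply: val_inj.
apply: matrix2P; rewrite !mxE /cofactor !det_mx11 !mxE /= ?lift01 ?lift10.
all: rewrite mxtrace2 /=; ring.
Qed.

Ltac mx2_entries := repeat (rewrite !mxE || rewrite !sum_ord2); rewrite /=.
Ltac mx2_ring := rewrite ?mxtrace2; apply: matrix2P; mx2_entries; ring.

Section TwoByTwo.
Variable R : comNzRingType.
Implicit Types A B : 'M[R]_2.

Lemma adjK A : \adj (\adj A) = A.
Proof. rewrite !adj_mx2; mx2_ring. Qed.

Lemma det_adj2 A : \det (\adj A) = \det A.
Proof. by rewrite adj_mx2 !det_mx2 mxtrace2 !mxE /=; ring. Qed.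

Lemma det_opp2 A : \det (- A) = \det A.
Proof. by rewrite !det_mx2 !mxE; ring. Qed.

Lemma comm_adjl A B : comm (\adj A) B = - comm A B.
Proof. rewrite adj_mx2 /comm; mx2_ring. Qed.

Lemma comm_adjr A B : comm A (\adj B) = - comm A B.
Proof. by rewrite commN comm_adjl commN opprK. Qed.

Lemma comm_twist A B : comm A B *m A = \adj A *m comm A B.
Proof. rewrite adj_mx2 /comm; mx2_ring. Qed.

Lemma comm_twist_adj A B : comm A B *m \adj A = A *m comm A B.
Proof.
have := comm_twist (\adj A) B.
by rewrite comm_adjl adjK mulNmx mulmxN => /oppr_inj.
Qed.

Lemma det_comm A B :
  \det (comm A B) = 4 * \det A * \det B - \det A * \tr B ^+ 2
    - \det B * \tr A ^+ 2 - \tr (A *m B) ^+ 2 + \tr A * \tr B * \tr (A *m B).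
Proof. rewrite !det_mx2 !mxtrace2 /comm; mx2_entries; ring. Qed.

Lemma det_comm_same_trace A B (s : R) :
  \det A = 1 -> \det B = 1 -> (s = 1 \/ s = -1) -> \tr B = s * \tr A ->
  \det (comm A B) =
    4 - 2 * \tr A ^+ 2 - \tr (A *m B) ^+ 2 + s * \tr A ^+ 2 * \tr (A *m B).
Proof.
by move=> dA dB s1 trB; rewrite det_comm dA dB trB; case: s1 => ->; ring.
Qed.
End TwoByTwo.

Definition right_movable (R : comNzRingType) (K M : 'M[R]_2) : Prop :=
  exists M', K *m M = M' *m K.

Definition left_multiple (R : comNzRingType) (K Q : 'M[R]_2) : Prop :=
  exists N, Q = N *m K.

Section Words.
Variables x y : 'M[int]_2.
Let S := [:: x; y].
Let K := comm x y.

Lemma letterP A : A \in S -> A = x \/ A = y.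
Proof. by rewrite !inE => /orP[/eqP|/eqP]; auto. Qed.

Lemma movable_mul A M :
  right_movable K A -> right_movable K M -> right_movable K (A *m M).
Proof.
move=> [A' eA] [M' eM]; exists (A' *m M').
by rewrite mulmxA eA -mulmxA eM mulmxA.
Qed.

Lemma movable_letter A :
  A \in S -> right_movable K A /\ right_movable K (\adj A).
Proof.
have Ky : K = - comm y x by rewrite commN opprK.
case/letterP=> ->; split.
- by exists (\adj x); rewrite comm_twist.
- by exists x; rewrite comm_twist_adj.
- by exists (\adj y); rewrite Ky mulNmx comm_twist mulmxN.
- by exists y; rewrite Ky mulNmx comm_twist_adj mulmxN.
Qed.

Lemma movable_word M : sgen S M -> right_movable K M.
Proof.
elim=> [|A M' SA _ IH|A M' SA _ IH].
- by exists 1%:M; rewrite mulmx1 mul1mx.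
- exact: movable_mul (movable_letter SA).1 IH.
- exact: movable_mul (movable_letter SA).2 IH.
Qed.

Lemma left_multiple_opp Q : left_multiple K Q -> left_multiple K (- Q).
Proof. by move=> [N ->]; exists (- N); rewrite mulNmx. Qed.

Lemma left_multiple_add Q1 Q2 :
  left_multiple K Q1 -> left_multiple K Q2 -> left_multiple K (Q1 + Q2).
Proof. by move=> [N1 ->] [N2 ->]; exists (N1 + N2); rewrite mulmxDl. Qed.

Lemma left_multiple_mull A Q : left_multiple K Q -> left_multiple K (A *m Q).
Proof. by move=> [N ->]; exists (A *m N); rewrite mulmxA. Qed.

Lemma left_multiple_mulr Q M :
  left_multiple K Q -> sgen S M -> left_multiple K (Q *m M).
Proof.
move=> [N ->] /movable_word [M' eM]; exists (N *m M').
by rewrite -mulmxA eM mulmxA.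
Qed.

Lemma comm_letters A B : A \in S -> B \in S -> left_multiple K (comm A B).
Proof.
have comm_self C : comm C C = 0 by rewrite /comm subrr.
move=> /letterP[]-> /letterP[]->; rewrite ?comm_self.
- by exists 0; rewrite mul0mx.
- by exists 1%:M; rewrite mul1mx.
- by exists (- 1%:M); rewrite commN mulNmx mul1mx.
- by exists 0; rewrite mul0mx.
Qed.

Lemma comm_letter_word A M :
  A \in S -> sgen S M -> left_multiple K (comm A M).
Proof.
move=> SA; elim=> [|B M' SB wM IH|B M' SB wM IH].
- by exists 0; rewrite /comm mulmx1 mul1mx subrr mul0mx.
- rewrite comm_mulr; apply: left_multiple_add (left_multiple_mull _ IH).
  exact: left_multiple_mulr (comm_letters SA SB) wM.
- rewrite comm_mulr comm_adjr mulNmx.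
  apply: left_multiple_add (left_multiple_mull _ IH).
  exact/left_multiple_opp/(left_multiple_mulr (comm_letters SA SB) wM).
Qed.

Lemma comm_words M1 M2 :
  sgen S M1 -> sgen S M2 -> left_multiple K (comm M1 M2).
Proof.
move=> w1 w2; elim: w1 => [|A M SA wM IH|A M SA wM IH].
- by exists 0; rewrite /comm mulmx1 mul1mx subrr mul0mx.
- rewrite comm_mull; apply: left_multiple_add (left_multiple_mull _ IH) _.
  exact: left_multiple_mulr (comm_letter_word SA w2) wM.
- rewrite comm_mull comm_adjl mulNmx.
  apply: left_multiple_add (left_multiple_mull _ IH) _.
  exact/left_multiple_opp/(left_multiple_mulr (comm_letter_word SA w2) wM).
Qed.

Lemma comm_pgen A B : pgen S A -> pgen S B -> left_multiple K (comm A B).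
Proof.
move=> gA gB.
suff : left_multiple K (comm A B) \/ left_multiple K (- comm A B).
  by case=> // /left_multiple_opp; rewrite opprK.
case: gA => wA; case: gB => wB;
  have := comm_words wA wB; rewrite ?comm_oppl ?comm_oppr ?opprK; auto.
Qed.
End Words.

Lemma int_unit_factor (p q : int) : p * q = -1 -> q = 1 \/ q = -1.
Proof.
move=> pq; have /orP[/eqP|/eqP] : q \is a GRing.unit; [|by left|by right].
by apply/unitrPr; exists (- p); rewrite mulrN mulrC pq opprK.
Qed.

Lemma square_gap4 (p q : int) : p ^+ 2 = q ^+ 2 + 4 -> q = 0.
Proof.
rewrite -(real_normK (num_real p)) -(real_normK (num_real q)) => e.
suff /eqP : `|q| = 0 by rewrite normr_eq0 => /eqP.
have := normr_ge0 p; have := normr_ge0 q.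
move: e; rewrite !expr2; move: `|p| `|q| => a b e a0 b0.
have ba : b < a by nia.
have b1 : b <= 1 by nia.
have [a2|a3] : a <= 2 \/ 3 <= a by lia.
all: nia.
Qed.

Lemma square_ne2_6 (t : int) : t ^+ 2 <> 2 /\ t ^+ 2 <> 6.
Proof.
rewrite -(real_normK (num_real t)) expr2; have := normr_ge0 t.
move: `|t| => a a0.
have [a1|[a2|a3]] : a <= 1 \/ a = 2 \/ 3 <= a by lia.
all: nia.
Qed.

(* With u = t^2: (2z - s u)^2 = (u - 4)^2 - 4e, so u - 4 = 0 if e = -1,
   while e = 1 would force u = 2 or u = 6. *)
Lemma trace_square_four (t z s e : int) :
  (s = 1 \/ s = -1) -> (e = 1 \/ e = -1) ->
  4 - 2 * t ^+ 2 - z ^+ 2 + s * t ^+ 2 * z = e -> t ^+ 2 = 4.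
Proof.
move=> s1 e1 eq_e.
have sq : (2 * z - s * t ^+ 2) ^+ 2 = (t ^+ 2 - 4) ^+ 2 - 4 * e.
  by rewrite -eq_e; case: s1 => ->; ring.
set w := t ^+ 2 - 4 in sq *; set v := 2 * z - s * t ^+ 2 in sq.
case: e1 => e_val; rewrite e_val in sq.
- have v0 : v = 0 by apply: (square_gap4 (p := w)); rewrite sq; ring.
  have : w ^+ 2 = 4 by move: sq; rewrite v0; lia.
  have [t2 t6] := square_ne2_6 t.
  rewrite /w; nia.
- have w0 : w = 0 by apply: (square_gap4 (p := v)); rewrite sq; ring.
  by apply/eqP; rewrite -subr_eq0 -/w w0.
Qed.

Lemma det_sgen S M :
  (forall A, A \in S -> \det A = 1) -> sgen S M -> \det M = 1.
Proof.
move=> detS; elim=> [|A M' SA _ IH|A M' SA _ IH]; first exact: det1.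
- by rewrite det_mulmx detS // IH mulr1.
- by rewrite det_mulmx det_adj2 detS // IH mulr1.
Qed.

Lemma det_Gamma3 M : Gamma3 M -> \det M = 1.
Proof.
have detCD A : A \in [:: matC; matD] -> \det A = 1.
  by rewrite !inE => /orP[]/eqP->; rewrite det_mx2 !mxE.
by case=> /(det_sgen detCD); rewrite ?det_opp2.
Qed.

Lemma pgen_mem S A : A \in S -> pgen S A.
Proof. by move=> SA; left; rewrite -[A]mulmx1; apply: sgenM (sgen1 _). Qed.

Lemma det_comm_CD : \det (comm matC matD) = -1.
Proof. by rewrite det_mx2 /comm; mx2_entries. Qed.

Lemma parabolic_of_comm (X Y : 'M[int]_2) :
  (\det (comm X Y) = 1 \/ \det (comm X Y) = -1) -> \tr X ^+ 2 = 4 ->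
  parabolic X.
Proof.
move=> detK trX.
have comm0 : comm X Y <> 0 by move=> K0; case: detK; rewrite K0 det0.
by split; [|split] => // eX; apply: comm0; rewrite eX ?comm_oppl comm_scalar ?oppr0.
Qed.

Theorem mainTheorem10 (X Y : 'M[int]_2) :
  Gamma3 X -> Gamma3 Y ->
  (forall M : 'M[int]_2, Gamma3 M -> pgen [:: X; Y] M) ->
  same_trace X Y ->
  parabolic X /\ parabolic Y.
Proof.
move=> GX GY genXY same.
have [N eN] : left_multiple (comm X Y) (comm matC matD).
  by apply: comm_pgen; apply: genXY; apply: pgen_mem; rewrite !inE eqxx ?orbT.
have detK : \det (comm X Y) = 1 \/ \det (comm X Y) = -1.
  by apply: (int_unit_factor (p := \det N)); rewrite -det_mulmx -eN det_comm_CD.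
have [s s1 trY] : exists2 s : int, s = 1 \/ s = -1 & \tr Y = s * \tr X.
  by case: same => ->; [exists 1 | exists (-1)]; rewrite ?mul1r ?mulN1r ?opprK; auto.
have trX : \tr X ^+ 2 = 4.
  have fricke := det_comm_same_trace (det_Gamma3 GX) (det_Gamma3 GY) s1 trY.
  rewrite fricke in detK; exact: (trace_square_four s1 detK).
have trY2 : \tr Y ^+ 2 = 4.
  by rewrite trY exprMn trX; case: s1 => ->; rewrite ?sqrrN expr1n mul1r.
split; first exact: parabolic_of_comm detK trX.
by apply: (parabolic_of_comm (Y := X)); rewrite // commN det_opp2.
Qed.
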